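(* Let $g(x)=\sin(x)^2$. For positive integers $m,n$, let $p=\gcd(m,n)$, $\mu=\pi/n$ and $\tilde{G}(m,n)=\frac{1}{\pi}\int_{-\pi/2}^{\pi/2}\prod_{i=0}^{n-1} g(x+mi\mu)\,dx$. Then $$\tilde{G}(m,n)=\frac{2^{p}\,(2p-1)!!}{4^n\, p!}.$$
   Context: $(2p-1)!!=1\cdot3\cdots(2p-1)$ denotes the double factorial. *)

From Stdlib Require Import Reals Lra Lia.
From Coquelicot Require Import Coquelicot.
Open Scope R_scope.

Fixpoint dfact_odd (p : nat) : nat :=
  match p with
  | O => 1%nat
  | S q => (dfact_odd q * (2 * q + 1))%nat
  end.

Definition g (x : R) : R := (sin x) ^ 2.

Fixpoint prod_upto (n : nat) (f : nat -> R) : R :=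
  match n with
  | O => 1
  | S k => prod_upto k f * f k
  end.

Definition Gtilde (m n : nat) : R :=
  let mu := PI / INR n in
  / PI * RInt (fun x => prod_upto n (fun i => g (x + INR m * INR i * mu)))
              (- (PI / 2)) (PI / 2).

From Stdlib Require Import Reals Arith Lra Lia.
From Coquelicot Require Import Coquelicot.
From mathcomp Require all_boot all_algebra.
From mathcomp Require Rstruct complex ring lra.
Open Scope R_scope.

(* Write m = m' p and n = N p with gcd(N, m') = 1. As m' is coprime to N, the angles
   2 m' j pi / N (j < N) run over the N-th roots of unity, so evaluating the factorisation
   of 1 - z^N gives prod_(j<N) |1 - e^(i(2x + 2 m' j pi/N))|^2 = |1 - e^(2iNx)|^2, that is
   prod_(j<N) 4 sin^2 (x + m' j pi/N) = 4 sin^2 (N x).  Since sin^2 has period pi, the n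
   factors of the integrand repeat this block p times, so the integrand equals
   4^(p-n) sin^(2p) (N x), whose integral over [-pi/2, pi/2] is the Wallis integral
   pi (2p-1)!! / (2^p p!), computed by integrating by parts. *)

Lemma cos_eq_1_turns s : cos s = 1 -> exists K : Z, s = IZR K * (2 * PI).
Proof.
intro Hcos.
assert (Hsin : sin (s / 2) = 0).
{ replace s with (2 * (s / 2)) in Hcos by field. rewrite cos_2a_sin in Hcos. nra. }
destruct (sin_eq_0_0 _ Hsin) as [K HK]. exists K. lra.
Qed.

Lemma dvd_of_whole_turns (N r k : nat) (K : Z) t : (0 < N)%nat -> Nat.gcd N r = 1%nat ->
  INR N * t = INR r * (2 * PI) -> INR k * t = IZR K * (2 * PI) -> Nat.divide N k.
Proof.
intros HN Hcop HNt Hkt.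
assert (HPI := PI_RGT_0).
assert (Hturns : INR k * INR r = IZR K * INR N).
{ apply (Rmult_eq_reg_r (2 * PI)); [|lra].
  transitivity (INR k * (INR N * t)); [rewrite HNt; ring|].
  transitivity (INR N * (INR k * t)); [ring|rewrite Hkt; ring]. }
rewrite <- mult_INR, !INR_IZR_INZ, <- mult_IZR in Hturns. apply eq_IZR in Hturns.
apply (Nat.gauss N r k); [|exact Hcop].
exists (Z.to_nat K). lia.
Qed.

Lemma cos_sin_whole_turns (r : nat) : cos (INR r * (2 * PI)) = 1 /\ sin (INR r * (2 * PI)) = 0.
Proof.
replace (INR r * (2 * PI)) with (0 + 2 * INR r * PI) by ring.
rewrite cos_period, sin_period, cos_0, sin_0. auto.
Qed.

Lemma prod_upto_ext n f f' : (forall i, f i = f' i) -> prod_upto n f = prod_upto n f'.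
Proof. intro Hff'. induction n as [|n IHn]; simpl; [reflexivity | rewrite IHn, Hff'; reflexivity]. Qed.

Lemma prod_upto_scal n c f : prod_upto n (fun i => c * f i) = c ^ n * prod_upto n f.
Proof. induction n as [|n IHn]; simpl; [ring | rewrite IHn; ring]. Qed.

Lemma prod_upto_add a b f :
  prod_upto (a + b) f = prod_upto a f * prod_upto b (fun i => f (a + i)%nat).
Proof.
induction b as [|b IHb].
- rewrite Nat.add_0_r. simpl. ring.
- rewrite Nat.add_succ_r. simpl. rewrite IHb. ring.
Qed.

Lemma prod_upto_periodic N k f : (forall i, f (N + i)%nat = f i) ->
  prod_upto (N * k) f = prod_upto N f ^ k.
Proof.
intro Hper. induction k as [|k IHk].
- rewrite Nat.mul_0_r. reflexivity.
- rewrite Nat.mul_succ_r, Nat.add_comm, prod_upto_add, (prod_upto_ext _ _ f Hper), IHk.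
  simpl. ring.
Qed.

(* Statements in this module are in ring_scope; on R its operations unfold to Rplus, Rmult,
   IZR 2, ..., so they apply by conversion to the R_scope goals below. *)
Module UnitCircle.
Import all_boot all_algebra Rstruct complex ring lra GRing.Theory.
Local Open Scope ring_scope.

Definition expi (t : R) : R[i] := Complex (cos t) (sin t).

Lemma expiD a b : expi (a + b) = expi a * expi b.
Proof. by rewrite /expi cos_plus sin_plus /= Rplus_comm. Qed.

Lemma expiX t k : expi t ^+ k = expi (INR k * t).
Proof.
elim: k => [|k IHk]; first by rewrite /expi Rmult_0_l cos_0 sin_0.
by rewrite exprS IHk -expiD S_INR Rmult_plus_distr_r Rmult_1_l Rplus_comm.
Qed.

Lemma expi_prim_root (N r : nat) t : (0 < N)%coq_nat -> Nat.gcd N r = 1%N ->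
  INR N * t = INR r * (2 * PI) -> N.-primitive_root (expi t).
Proof.
move=> /ltP N_gt0 coNr Nt.
have expiN : expi t ^+ N = 1.
  have [cos1 sin0] := cos_sin_whole_turns r.
  by rewrite expiX (congr1 expi Nt) /expi cos1 sin0.
(* The order k of expi t divides N, and N divides k as k t is a whole number of turns. *)
have [k prim_k k_dvd_N] := prim_order_exists N_gt0 expiN.
have /eqP : expi t ^+ k = 1 := prim_expr_order prim_k.
rewrite expiX /expi eq_complex /= => /andP[/eqP /cos_eq_1_turns [K kt] _].
have N_dvd_k : (N %| k)%N.
  by apply/dvdnP; have [q ->] := dvd_of_whole_turns N r k K t (ltP N_gt0) coNr Nt kt; exists q.
by have /eqP <- : k == N by rewrite eqn_dvd k_dvd_N N_dvd_k.
Qed.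

Lemma prod_one_sub_expi N a t : N.-primitive_root (expi t) ->
  \prod_(0 <= j < N) (1 - expi (a + INR j * t)) = 1 - expi (INR N * a).
Proof.
move=> prim_t.
have expi_a_inv : expi a * expi (- a) = 1.
  by rewrite -expiD Rplus_opp_r /expi cos_0 sin_0.
(* Evaluate X^N - 1 = \prod_j (X - (expi t)^j) at expi (- a). *)
have prod_roots : \prod_(0 <= j < N) (expi (- a) - expi t ^+ j) = expi (- a) ^+ N - 1.
  have := congr1 (fun p => p.[expi (- a)]) (factor_Xn_sub_1 prim_t).
  rewrite /= horner_prod hornerD hornerN hornerXn hornerC => <-.
  by apply: eq_bigr => j _; rewrite hornerXsubC.
transitivity (\prod_(0 <= j < N) (expi a * (expi (- a) - expi t ^+ j))).
  by apply: eq_bigr => j _; rewrite mulrBr expi_a_inv expiX expiD.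
rewrite big_split /= prod_roots prodr_const_nat subn0 mulrBr mulr1 -exprMn expi_a_inv expr1n.
by rewrite expiX.
Qed.

Lemma one_sub_expi_mul_conj u : ((2 * (1 - cos u))%:C)%C = (1 - expi u) * (1 - expi u)^*.
Proof.
have pythagoras : sin u * sin u + cos u * cos u = 1 by exact: sin2_cos2.
apply/eqP; rewrite eq_complex /=; apply/andP; split; apply/eqP; last by ring.
nra.
Qed.

Lemma prod_upto_big n f : prod_upto n f = \prod_(0 <= j < n) f j.
Proof.
elim: n => [|n IHn]; first by rewrite big_geq.
by rewrite big_nat_recr //= IHn.
Qed.

Lemma prod_one_sub_cos N a t : N.-primitive_root (expi t) ->
  prod_upto N (fun j => 2 * (1 - cos (a + INR j * t))) = 2 * (1 - cos (INR N * a)).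
Proof.
move=> prim_t; apply: complexI.
rewrite prod_upto_big rmorph_prod.
transitivity (\prod_(0 <= j < N) ((1 - expi (a + INR j * t)) * (1 - expi (a + INR j * t))^*)).
  by apply: eq_bigr => j _; exact: one_sub_expi_mul_conj.
rewrite big_split /= -rmorph_prod prod_one_sub_expi //.
by symmetry; exact: one_sub_expi_mul_conj.
Qed.
End UnitCircle.

Lemma four_g_cos y : 4 * g y = 2 * (1 - cos (2 * y)).
Proof. unfold g. rewrite cos_2a_sin. ring. Qed.

Lemma prod_four_g_coprime (m' N : nat) x : (0 < N)%nat -> Nat.gcd N m' = 1%nat ->
  prod_upto N (fun j => 4 * g (x + INR m' * INR j * (PI / INR N))) = 4 * g (INR N * x).
Proof.
intros HN Hcop.
assert (HNR : INR N <> 0) by (apply not_0_INR; lia).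
set (t := INR m' * (2 * PI) / INR N).
assert (Nt : INR N * t = INR m' * (2 * PI)) by (unfold t; field; exact HNR).
transitivity (prod_upto N (fun j => 2 * (1 - cos (2 * x + INR j * t)))).
- apply prod_upto_ext. intro j. rewrite four_g_cos. do 3 f_equal. unfold t. field. exact HNR.
- rewrite four_g_cos. replace (2 * (INR N * x)) with (INR N * (2 * x)) by ring.
  exact (UnitCircle.prod_one_sub_cos N (2 * x) t (UnitCircle.expi_prim_root N m' t HN Hcop Nt)).
Qed.

Lemma g_add_nat_PI y k : g (y + INR k * PI) = g y.
Proof.
induction k as [|k IHk].
- simpl. rewrite Rmult_0_l, Rplus_0_r. reflexivity.
- rewrite S_INR. replace (y + (INR k + 1) * PI) with (y + INR k * PI + PI) by ring.
  unfold g in *. rewrite neg_sin, <- IHk. ring.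
Qed.

Lemma prod_g_shifts (m n m' N p : nat) x : m = (m' * p)%nat -> n = (N * p)%nat ->
  (0 < N)%nat -> (0 < p)%nat -> Nat.gcd N m' = 1%nat ->
  4 ^ n * prod_upto n (fun i => g (x + INR m * INR i * (PI / INR n))) = 4 ^ p * g (INR N * x) ^ p.
Proof.
intros Hm Hn HN Hp Hcop.
assert (HNR : INR N <> 0) by (apply not_0_INR; lia).
assert (HpR : INR p <> 0) by (apply not_0_INR; lia).
set (f := fun i => g (x + INR m' * INR i * (PI / INR N))).
rewrite (prod_upto_ext _ _ f).
2: { intro i. unfold f. rewrite Hm, Hn, !mult_INR. do 2 f_equal. field. auto. }
assert (Hper : forall i, f (N + i)%nat = f i).
{ intro i. unfold f.
  rewrite <- (g_add_nat_PI (x + INR m' * INR i * (PI / INR N)) m').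
  f_equal. rewrite plus_INR. field. exact HNR. }
rewrite Hn, prod_upto_periodic, pow_mult, <- Rpow_mult_distr by exact Hper.
rewrite <- prod_upto_scal. unfold f. rewrite prod_four_g_coprime by assumption.
apply Rpow_mult_distr.
Qed.

Section WallisIntegral.

Variable N : nat.
Hypothesis N_pos : (0 < N)%nat.

Let I (q : nat) : R := RInt (fun x => g (INR N * x) ^ q) (- (PI / 2)) (PI / 2).

Lemma is_derive_sin_pow_cos q x :
  is_derive (fun x => sin (INR N * x) ^ (2 * q + 1) * cos (INR N * x)) x
    (INR N * (INR (2 * q + 1) * g (INR N * x) ^ q - INR (2 * q + 2) * g (INR N * x) ^ S q)).
Proof.
auto_derive; [easy|].
unfold g. rewrite <- !pow_mult.
replace (q + (q + 0) + 1)%nat with (S (2 * q)) by lia.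
replace (2 * S q)%nat with (S (S (2 * q))) by lia.
replace (2 * q + 1)%nat with (S (2 * q)) by lia.
replace (2 * q + 2)%nat with (S (S (2 * q))) by lia.
set (s := sin (INR N * x)). set (c := cos (INR N * x)). set (k := (2 * q)%nat).
assert (pythagoras : c * c = 1 - s * s).
{ pose proof (sin2_cos2 (INR N * x)) as Hsc. unfold Rsqr in Hsc. fold s c in Hsc. lra. }
rewrite !S_INR. simpl.
transitivity (INR N * (INR k + 1) * s ^ k * (c * c) - INR N * s ^ k * (s * s)); [ring|].
rewrite pythagoras. ring.
Qed.

Lemma sin_pow_cos_half_pi q b : b = PI / 2 \/ b = - (PI / 2) ->
  sin (INR N * b) ^ (2 * q + 1) * cos (INR N * b) = 0.
Proof.
intro Hb.
assert (Hsin : sin (2 * (INR N * b)) = 0).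
{ apply sin_eq_0_1. rewrite INR_IZR_INZ.
  destruct Hb as [-> | ->]; [exists (Z.of_nat N) | exists (- Z.of_nat N)%Z];
    rewrite ?opp_IZR; field. }
set (y := INR N * b) in *.
replace (sin y ^ (2 * q + 1) * cos y) with (sin y ^ (2 * q) * sin (2 * y) / 2)
  by (rewrite sin_2a, pow_add; field).
rewrite Hsin. field.
Qed.

Lemma ex_RInt_g_pow q a b : ex_RInt (fun x => g (INR N * x) ^ q) a b.
Proof.
apply (ex_RInt_continuous (V := R_CompleteNormedModule)). intros x _.
apply (ex_derive_continuous (V := R_NormedModule)). unfold g. auto_derive. easy.
Qed.

Lemma RInt_g_pow_rec q : INR (2 * q + 2) * I (S q) = INR (2 * q + 1) * I q.
Proof.
assert (HNR : INR N <> 0) by (apply not_0_INR; lia).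
set (F := fun x => sin (INR N * x) ^ (2 * q + 1) * cos (INR N * x)).
set (G := fun k x => g (INR N * x) ^ k).
set (dF := fun x => INR N * (INR (2 * q + 1) * G q x - INR (2 * q + 2) * G (S q) x)).
assert (Hftc : is_RInt dF (- (PI / 2)) (PI / 2) (minus (F (PI / 2)) (F (- (PI / 2))))).
{ apply (is_RInt_derive F).
  - intros x _. apply is_derive_sin_pow_cos.
  - intros x _. apply (ex_derive_continuous (V := R_NormedModule) dF).
    unfold dF, G, g. auto_derive. easy. }
unfold F in Hftc. rewrite !sin_pow_cos_half_pi in Hftc by auto.
assert (Hlin : is_RInt dF (- (PI / 2)) (PI / 2)
                 (INR N * (INR (2 * q + 1) * I q - INR (2 * q + 2) * I (S q)))).
{ apply (is_RInt_scal (fun x => INR (2 * q + 1) * G q x - INR (2 * q + 2) * G (S q) x)).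
  apply (is_RInt_minus (fun x => INR (2 * q + 1) * G q x) (fun x => INR (2 * q + 2) * G (S q) x));
    [apply (is_RInt_scal (G q)) | apply (is_RInt_scal (G (S q)))];
    apply (RInt_correct (V := R_CompleteNormedModule)), ex_RInt_g_pow. }
pose proof (is_RInt_unique _ _ _ _ Hftc) as H0.
rewrite (is_RInt_unique _ _ _ _ Hlin) in H0.
rewrite minus_eq_zero in H0.
apply (Rmult_eq_reg_l (INR N)); [change zero with 0 in H0; lra | exact HNR].
Qed.

Lemma RInt_g_pow p : I p = PI * INR (dfact_odd p) / (2 ^ p * INR (fact p)).
Proof.
induction p as [|q IHq].
- unfold I. simpl pow. rewrite RInt_const. unfold scal. simpl. unfold mult. simpl. field.
- assert (H2q : INR (2 * q + 2) <> 0) by (apply not_0_INR; lia).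
  apply (Rmult_eq_reg_l (INR (2 * q + 2))); [|exact H2q].
  rewrite RInt_g_pow_rec, IHq.
  change (dfact_odd (S q)) with (dfact_odd q * (2 * q + 1))%nat.
  rewrite fact_simpl, !mult_INR, <- tech_pow_Rmult.
  replace (INR (2 * q + 2)) with (2 * INR (S q)) by (rewrite S_INR, plus_INR, mult_INR; simpl; ring).
  replace (INR (2 * q + 1)) with (2 * INR q + 1) by (rewrite plus_INR, mult_INR; simpl; ring).
  assert (INR (fact q) <> 0) by apply INR_fact_neq_0.
  assert (INR (S q) <> 0) by (apply not_0_INR; lia).
  assert (2 ^ q <> 0) by (apply pow_nonzero; lra).
  field. auto.
Qed.

End WallisIntegral.

Lemma gcd_cofactors m n : (0 < n)%nat ->
  exists m' N, m = (m' * Nat.gcd m n)%nat /\ n = (N * Nat.gcd m n)%nat /\ Nat.gcd N m' = 1%nat.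
Proof.
intro Hn.
destruct (Nat.gcd_divide_l m n) as [m' Hm']. destruct (Nat.gcd_divide_r m n) as [N HN].
exists m', N. repeat split; try assumption.
assert (Hp : Nat.gcd m n <> 0%nat) by (rewrite Nat.gcd_eq_0; lia).
apply (Nat.mul_cancel_r _ _ (Nat.gcd m n) Hp).
rewrite <- Nat.gcd_mul_mono_r, <- HN, <- Hm', Nat.gcd_comm. lia.
Qed.

Theorem lemma5p1 (m n : nat) (hm : (0 < m)%nat) (hn : (0 < n)%nat) :
  let p := Nat.gcd m n in
  Gtilde m n = 2 ^ p * INR (dfact_odd p) / (4 ^ n * INR (fact p)).
Proof.
intro p.
destruct (gcd_cofactors m n hn) as (m' & N & Hm & Hn & Hcop). fold p in Hm, Hn.
assert (HN : (0 < N)%nat) by nia.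
assert (Hp : (0 < p)%nat) by nia.
assert (H4n : 4 ^ n <> 0) by (apply pow_nonzero; lra).
unfold Gtilde.
rewrite (RInt_ext _ (fun x => scal (4 ^ p / 4 ^ n) (g (INR N * x) ^ p))).
2: { intros x _. unfold scal. simpl. unfold mult. simpl.
     apply (Rmult_eq_reg_l (4 ^ n)); [|exact H4n].
     rewrite (prod_g_shifts m n m' N p x) by assumption. field. exact H4n. }
rewrite (RInt_scal (V := R_CompleteNormedModule)) by apply ex_RInt_g_pow.
rewrite RInt_g_pow by exact HN.
unfold scal. simpl. unfold mult. simpl.
replace (4 ^ p) with (2 ^ p * 2 ^ p) by (rewrite <- Rpow_mult_distr; f_equal; ring).
assert (HPI := PI_RGT_0).
assert (INR (fact p) <> 0) by apply INR_fact_neq_0.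
assert (2 ^ p <> 0) by (apply pow_nonzero; lra).
field. repeat split; auto; lra.
Qed.
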